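(* Let $0<\mathbb{P}_l<\mathbb{P}_u$ and $0<\mathbb{S}_l<\mathbb{S}_u$, and let $P_t$ be a positive integrable random variable (the pool price at time $t$ under the risk-neutral pricing measure, with zero interest rate). For $K>0$ let $\mathbf{C}(K)=\mathbb{E}[(P_t-K)^+]$ and $\mathbf{P}(K)=\mathbb{E}[(K-P_t)^+]$ be the European call and put prices with maturity $t$ and strike $K$. With $\mathrm{UIL}^{\mathtt{R}}$ and $\mathrm{UIL}^{\mathtt{L}}$ as defined in the context, $$\mathbb{E}[\mathrm{UIL}^{\mathtt{R}}]=-\tfrac12\int_{\mathbb{P}_l}^{\mathbb{P}_u}K^{-3/2}\mathbf{C}(K)\,\mathrm{d}K,\qquad \mathbb{E}[\mathrm{UIL}^{\mathtt{L}}]=-\tfrac12\int_{\mathbb{S}_l}^{\mathbb{S}_u}K^{-3/2}\mathbf{P}(K)\,\mathrm{d}K.$$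
   Context: Unit impermanent losses per liquidity for the exit price $P_t$: $\mathrm{UIL}^{\mathtt{R}}=\big(2\sqrt{P_t}-\tfrac{P_t}{\sqrt{\mathbb{P}_l}}-\sqrt{\mathbb{P}_l}\big)\mathbf{1}_{\{\mathbb{P}_l\le P_t\le \mathbb{P}_u\}}+\big(\sqrt{\mathbb{P}_u}-\sqrt{\mathbb{P}_l}-(\tfrac{1}{\sqrt{\mathbb{P}_l}}-\tfrac{1}{\sqrt{\mathbb{P}_u}})P_t\big)\mathbf{1}_{\{P_t\ge \mathbb{P}_u\}}$ (liquidity supplied on the interval $[\mathbb{P}_l,\mathbb{P}_u]$ to the right of the initial price), and $\mathrm{UIL}^{\mathtt{L}}=\big(2\sqrt{P_t}-\tfrac{P_t}{\sqrt{\mathbb{S}_u}}-\sqrt{\mathbb{S}_u}\big)\mathbf{1}_{\{\mathbb{S}_l\le P_t\le \mathbb{S}_u\}}+\big((\tfrac{1}{\sqrt{\mathbb{S}_l}}-\tfrac{1}{\sqrt{\mathbb{S}_u}})P_t-\sqrt{\mathbb{S}_u}+\sqrt{\mathbb{S}_l}\big)\mathbf{1}_{\{P_t\le \mathbb{S}_l\}}$ (liquidity supplied on $[\mathbb{S}_l,\mathbb{S}_u]$ to the left of the initial price). Here $y^+=\max(y,0)$. *)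

From HB Require Import structures.
From mathcomp Require Import all_boot all_order all_algebra.
From mathcomp Require Import all_classical all_reals all_analysis.
Set Implicit Arguments. Unset Strict Implicit. Unset Printing Implicit Defensive.
Import Order.TTheory GRing.Theory Num.Theory.
Local Open Scope ring_scope.

(* Unit impermanent loss (per unit liquidity) for liquidity supplied on
   [Pl, Pu] to the right of the initial price, as a function of exit price p. *)
Definition UIL_R {R : realType} (Pl Pu p : R) : R :=
  if (Pl <= p) && (p <= Pu) then
    2 * Num.sqrt p - p / Num.sqrt Pl - Num.sqrt Pl
  else if Pu <= p then
    Num.sqrt Pu - Num.sqrt Pl - ((Num.sqrt Pl)^-1 - (Num.sqrt Pu)^-1) * p
  else 0.

(* Same, for liquidity supplied on [Sl, Su] to the left of the initial price. *)
Definition UIL_L {R : realType} (Sl Su p : R) : R :=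
  if (Sl <= p) && (p <= Su) then
    2 * Num.sqrt p - p / Num.sqrt Su - Num.sqrt Su
  else if p <= Sl then
    ((Num.sqrt Sl)^-1 - (Num.sqrt Su)^-1) * p - Num.sqrt Su + Num.sqrt Sl
  else 0.

Definition call_price {d} {T : measurableType d} {R : realType}
  (P : probability T R) (X : T -> R) (K : R) : \bar R :=
  ('E_P[fun w => (Num.max (X w - K) 0)%R])%E.
Definition put_price {d} {T : measurableType d} {R : realType}
  (P : probability T R) (X : T -> R) (K : R) : \bar R :=
  ('E_P[fun w => (Num.max (K - X w) 0)%R])%E.

From HB Require Import structures.
From mathcomp Require Import all_boot all_order all_algebra.
From mathcomp Require Import all_classical all_reals all_analysis.
From mathcomp Require Import measurable_realfun ring.
Import Order.TTheory GRing.Theory Num.Theory.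
Import numFieldNormedType.Exports.
Local Open Scope classical_set_scope.
Local Open Scope ring_scope.

(* Both sides are integrals of functions of constant sign, so Tonelli lets us
   exchange E and dK, and the identity reduces to a pathwise one: for p > 0,
   int_[Pl,Pu] K^(-3/2) (p - K)^+ dK = -2 UIL_R(p), and symmetrically for puts.
   Since -2 (sqrt K + p / sqrt K) is a primitive of K^(-3/2) (p - K), the left
   integral is that primitive evaluated between Pl and p clamped to [Pl, Pu],
   which is exactly the piecewise formula defining UIL_R. *)

Section fubini_tonelli_in.
Context {d1 d2 : measure_display} {T1 : measurableType d1}
  {T2 : measurableType d2} {R : realType}
  (m1 : {sigma_finite_measure set T1 -> \bar R})
  (m2 : {sigma_finite_measure set T2 -> \bar R}).
Variables (D : set T2) (f : T1 * T2 -> \bar R).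
Hypotheses (mD : measurable D) (mf : measurable_fun setT f)
  (f0 : forall z, (0 <= f z)%E).

Let fD := f \_ (setT `*` D).

Let mfD : measurable_fun setT fD.
Proof.
apply/(measurable_restrictT _ (measurableX measurableT mD)).
exact: measurable_funS mf.
Qed.

Let fD0 z : (0 <= fD z)%E.
Proof. by rewrite /fD patchE; case: ifP => _ //; exact: f0. Qed.

Let fDE x y : fD (x, y) = ((fun y => f (x, y)) \_ D) y.
Proof. by rewrite /fD !patchE in_setX in_setT. Qed.

Lemma measurable_fun_integral_in :
  measurable_fun setT (fun x => \int[m2]_(y in D) f (x, y))%E.
Proof.
rewrite (_ : (fun x => _) = fubini_F m2 fD); last first.
  apply: boolp.funext => x; rewrite integral_mkcond /fubini_F.
  by apply: eq_integral => y _; rewrite fDE.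
exact: measurable_fun_fubini_tonelli_F.
Qed.

Lemma fubini_tonelli_in :
  (\int[m1]_x \int[m2]_(y in D) f (x, y) =
   \int[m2]_(y in D) \int[m1]_x f (x, y))%E.
Proof.
transitivity (\int[m1]_x \int[m2]_y fD (x, y))%E.
  apply: eq_integral => x _; rewrite integral_mkcond.
  by apply: eq_integral => y _; rewrite fDE.
rewrite fubini_tonelli // [RHS]integral_mkcond; apply: eq_integral => y _ /=.
rewrite patchE; case: ifP => yD.
  by apply: eq_integral => x _; rewrite fDE patchE yD.
by rewrite integral0_eq // => x _; rewrite fDE patchE yD.
Qed.

End fubini_tonelli_in.

Section strike_integrals.
Context {R : realType}.
Implicit Types (a b m al be : R) (f : R -> \bar R).

Lemma powR_half (x : R) : 0 <= x -> powR x (1 / 2) = Num.sqrt x.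
Proof. by move=> x0; rewrite div1r powR12_sqrt. Qed.

Lemma powR_Nhalf (x : R) : 0 <= x -> powR x (- (1 / 2)) = (Num.sqrt x)^-1.
Proof. by move=> x0; rewrite powRN powR_half. Qed.

Lemma is_derive_powRN32_affine_primitive al be {x : R} : 0 < x ->
  is_derive x 1 (fun y => 2 * al * powR y (1 / 2) - 2 * be * powR y (- (1 / 2)))
    (powR x (- (3 / 2)) * (al * x + be)).
Proof.
move=> x0.
have := is_deriveB (is_deriveZ (2 * al) (@is_derive1_powR R (1 / 2) x x0))
                   (is_deriveZ (2 * be) (@is_derive1_powR R (- (1 / 2)) x x0)).
congr is_derive.
have -> : (1 / 2 - 1 : R) = - (1 / 2) by field.
have -> : (- (1 / 2) - 1 : R) = - (3 / 2) by field.
have -> : powR x (- (1 / 2)) = powR x (- (3 / 2)) * x.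
  rewrite -{3}(powRr1 (ltW x0)) -powRD ?(gt_eqF x0) ?implybT //.
  by congr powR; field.
by rewrite /GRing.scale /=; field.
Qed.

Lemma integral_powRN32_affine al be a b : 0 < a -> a < b ->
  (\int[lebesgue_measure]_(K in `[a, b])
      (powR K (- (3 / 2)) * (al * K + be))%:E =
   (2 * (al * Num.sqrt b - be / Num.sqrt b) -
    2 * (al * Num.sqrt a - be / Num.sqrt a))%:E)%E.
Proof.
move=> a0 ab; have b0 := lt_trans a0 ab.
pose G x := 2 * al * powR x (1 / 2) - 2 * be * powR x (- (1 / 2)).
have G_cont (x : R) : 0 < x -> G y @[y --> x] --> G x.
  move=> x0; apply/differentiable_continuous; rewrite -derivable1_diffP.
  by case: (is_derive_powRN32_affine_primitive al be x0).
rewrite (@continuous_FTC2 _ _ G) //.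
- rewrite /G !powR_half ?powR_Nhalf ?ltW //; congr (_%:E); ring.
- apply: derivable_within_continuous => x; rewrite in_itv /= => /andP[ax _].
  have x0 := lt_le_trans a0 ax.
  apply: derivableM; first by apply: derivable_powR; rewrite in_itv /= x0.
  apply: derivableD; last exact: derivable_cst.
  by apply: derivableM; [exact: derivable_cst|exact: derivable_id].
- split.
  + move=> x; rewrite in_itv /= => /andP[ax _].
    by case: (is_derive_powRN32_affine_primitive al be (lt_trans a0 ax)).
  + exact/cvg_at_right_filter/G_cont.
  + exact/cvg_at_left_filter/G_cont.
- move=> x; rewrite in_itv /= => /andP[ax _].
  rewrite derive1E.
  by have [_ ->] := is_derive_powRN32_affine_primitive al be (lt_trans a0 ax).
Qed.

Lemma integral_itvcc_cutr f a m b : m <= b ->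
  (forall K, m < K <= b -> f K = 0) ->
  (\int[lebesgue_measure]_(K in `[a, b]) f K =
   \int[lebesgue_measure]_(K in `[a, m]) f K)%E.
Proof.
move=> mb f0; rewrite [LHS]integral_mkcond [RHS]integral_mkcond.
apply: eq_integral => K _.
rewrite !patchE !mem_setE !in_itv /=.
have [aK|] := boolP (a <= K); last by rewrite !andFb.
have [Km|mK] := leP K m; first by rewrite (le_trans Km mb).
by case: ifP => // /andP[_ Kb]; rewrite f0 // mK.
Qed.

Lemma integral_itvcc_cutl f a m b : a <= m ->
  (forall K, a <= K < m -> f K = 0) ->
  (\int[lebesgue_measure]_(K in `[a, b]) f K =
   \int[lebesgue_measure]_(K in `[m, b]) f K)%E.
Proof.
move=> am f0; rewrite [LHS]integral_mkcond [RHS]integral_mkcond.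
apply: eq_integral => K _.
rewrite !patchE !mem_setE !in_itv /=.
have [Kb|] := boolP (K <= b); last by rewrite !andbF.
have [mK|Km] := leP m K; first by rewrite (le_trans am mK).
by case: ifP => // /andP[aK _]; rewrite f0 // aK.
Qed.

End strike_integrals.

Section impermanent_loss.
Context {R : realType}.
Implicit Types (a b p : R).

Lemma sqrtr_add_div_sqrtr (x : R) : 0 < x ->
  Num.sqrt x + x / Num.sqrt x = 2 * Num.sqrt x.
Proof.
move=> x0; have sx0 : Num.sqrt x != 0 by rewrite gt_eqF ?sqrtr_gt0.
by rewrite -{2}(sqr_sqrtr (ltW x0)) expr2 mulfK //; ring.
Qed.

Lemma UIL_R_clamp a b p : 0 < a -> a <= b -> 0 < p ->
  UIL_R a b p =
  let m := Num.max a (Num.min p b) in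
  (Num.sqrt m + p / Num.sqrt m) - (Num.sqrt a + p / Num.sqrt a).
Proof.
move=> a0 ab p0 /=; rewrite /UIL_R.
have [pa|ap] := ltP p a.
  by rewrite max_l ?subrr ?ge_min ?(ltW pa) //= leNgt (lt_le_trans pa ab).
have [pb|bp] := leP p b.
  by rewrite /= max_r // sqrtr_add_div_sqrtr //; ring.
rewrite (ltW bp) /= max_r //.
by field; rewrite !gt_eqF ?sqrtr_gt0 ?(lt_le_trans a0 ab).
Qed.

Lemma UIL_L_clamp a b p : 0 < a -> a <= b -> 0 < p ->
  UIL_L a b p =
  let m := Num.min b (Num.max p a) in
  (Num.sqrt m + p / Num.sqrt m) - (Num.sqrt b + p / Num.sqrt b).
Proof.
move=> a0 ab p0 /=; rewrite /UIL_L.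
have [bp|pb] := ltP b p.
  by rewrite andbF min_l ?le_max ?(ltW bp) // subrr leNgt (le_lt_trans ab bp).
have [pa|ap] := leP p a.
  rewrite andbT; have [-> /=|pa'] := eqVneq p a.
    by rewrite lexx min_r // sqrtr_add_div_sqrtr //; ring.
  have -> : a <= p = false by rewrite leNgt lt_neqAle pa' pa.
  rewrite /= min_r //.
  by field; rewrite !gt_eqF ?sqrtr_gt0 ?(lt_le_trans a0 ab).
by rewrite (ltW ap) /= min_r // sqrtr_add_div_sqrtr //; ring.
Qed.

Lemma integral_call_payoff a b p : 0 < a -> a < b -> 0 < p ->
  (\int[lebesgue_measure]_(K in `[a, b])
      (powR K (- (3 / 2)) * Num.max (p - K) 0)%:E =
   (-2 * UIL_R a b p)%:E)%E.
Proof.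
move=> a0 ab p0; rewrite UIL_R_clamp ?(ltW ab) //=.
have [pa|ap] := leP p a.
  rewrite max_l ?ge_min ?pa // subrr mulr0 integral0_eq // => K.
  rewrite /= in_itv /= => /andP[aK _].
  by rewrite max_r ?mulr0 // subr_le0 (le_trans pa aK).
have am : a < Num.min p b by rewrite lt_min ap ab.
have mb : Num.min p b <= b by rewrite ge_min lexx orbT.
rewrite max_r ?(ltW am) // (@integral_itvcc_cutr _ _ a (Num.min p b) b) //;
  last first.
  move=> K /andP[+ Kb]; rewrite gt_min => /orP[pK|]; last by rewrite ltNge Kb.
  by rewrite max_r ?mulr0 // subr_le0 ltW.
transitivity (\int[lebesgue_measure]_(K in `[a, Num.min p b])
                (powR K (- (3 / 2)) * (-1 * K + p))%:E)%E.
  apply: eq_integral => K; rewrite inE /= in_itv /= => /andP[_].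
  by rewrite le_min => /andP[Kp _]; rewrite max_l ?subr_ge0 // mulN1r addrC.
by rewrite integral_powRN32_affine //; congr (_%:E); ring.
Qed.

Lemma integral_put_payoff a b p : 0 < a -> a < b -> 0 < p ->
  (\int[lebesgue_measure]_(K in `[a, b])
      (powR K (- (3 / 2)) * Num.max (K - p) 0)%:E =
   (-2 * UIL_L a b p)%:E)%E.
Proof.
move=> a0 ab p0; rewrite UIL_L_clamp ?(ltW ab) //=.
have [bp|pb] := leP b p.
  rewrite min_l ?le_max ?bp // subrr mulr0 integral0_eq // => K.
  rewrite /= in_itv /= => /andP[_ Kb].
  by rewrite max_r ?mulr0 // subr_le0 (le_trans Kb bp).
have mb : Num.max p a < b by rewrite gt_max pb ab.
have am : a <= Num.max p a by rewrite le_max lexx orbT.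
rewrite min_r ?(ltW mb) // (@integral_itvcc_cutl _ _ a (Num.max p a) b) //;
  last first.
  move=> K /andP[aK]; rewrite lt_max => /orP[Kp|]; last by rewrite ltNge aK.
  by rewrite max_r ?mulr0 // subr_le0 ltW.
transitivity (\int[lebesgue_measure]_(K in `[Num.max p a, b])
                (powR K (- (3 / 2)) * (1 * K + - p))%:E)%E.
  apply: eq_integral => K; rewrite inE /= in_itv /= => /andP[+ _].
  by rewrite ge_max => /andP[pK _]; rewrite max_l ?subr_ge0 // mul1r.
by rewrite integral_powRN32_affine ?(lt_le_trans a0 am) //; congr (_%:E); ring.
Qed.

End impermanent_loss.

Section expectation_strike_integral.
Context {d : measure_display} {T : measurableType d} {R : realType}.
Variables (P : probability T R) (X : T -> R) (D : set R).
Variables (w : R -> R) (phi : R -> R -> R) (U : R -> R).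
Hypotheses (mX : measurable_fun setT X) (mD : measurable D).
Hypotheses (mw : measurable_fun setT w) (w0 : forall K, 0 <= w K).
Hypotheses (mphi : measurable_fun setT (fun z : R * R => phi z.1 z.2))
  (phi0 : forall x K, 0 <= phi x K).
Hypothesis inner : forall t,
  (\int[@lebesgue_measure R]_(K in D) (w K * phi (X t) K)%:E =
   (-2 * U (X t))%:E)%E.

Let f (z : T * R) := (w z.2 * phi (X z.1) z.2)%:E.

Let mf : measurable_fun setT f.
Proof.
apply/measurable_EFinP; apply: measurable_funM.
  exact: measurableT_comp mw measurable_snd.
apply: measurableT_comp mphi (measurable_fun_pair _ measurable_snd).
exact: measurableT_comp mX measurable_fst.
Qed.

Let f0 z : (0 <= f z)%E.
Proof. by rewrite lee_fin mulr_ge0. Qed.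

Lemma expectation_eq_strike_integral :
  ('E_P[fun t => U (X t)] =
   (- (1 / 2))%:E *
   \int[@lebesgue_measure R]_(K in D)
      ((w K)%:E * 'E_P[fun t => phi (X t) K]))%E.
Proof.
have strike_integral_ge0 t : 0 <= -2 * U (X t).
  by rewrite -lee_fin -inner; apply: integral_ge0 => K _; exact: f0 (t, K).
have mstrike_integral : measurable_fun setT (fun t => (-2 * U (X t))%:E).
  rewrite (_ : (fun t => _) =
               fun t => \int[lebesgue_measure]_(K in D) f (t, K))%E.
    exact: measurable_fun_integral_in.
  by apply: boolp.funext => t; rewrite inner.
transitivity ((- (1 / 2))%:E * \int[P]_t (-2 * U (X t))%:E)%E.
  rewrite unlock EFinN mulNe -ge0_integralZl_EFin //; last first.
    by move=> t _; rewrite lee_fin.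
  rewrite -integral_ge0N => [|t _]; last by rewrite -EFinM lee_fin mulr_ge0.
  by apply: eq_integral => t _; rewrite -EFinM -EFinN; congr (_%:E); field.
congr (_ * _)%E.
transitivity (\int[P]_t \int[lebesgue_measure]_(K in D) f (t, K))%E.
  by apply: eq_integral => t _; rewrite inner.
rewrite fubini_tonelli_in //; apply: eq_integral => K _.
rewrite unlock -ge0_integralZl_EFin //.
- by move=> t _; rewrite lee_fin.
- apply/measurable_EFinP.
  exact: measurableT_comp mphi (measurable_fun_pair mX (measurable_cst K)).
Qed.

End expectation_strike_integral.

Theorem proposition2 (d : measure_display) (T : measurableType d) (R : realType)
  (P : probability T R) (X : {RV P >-> R})
  (Pl Pu Sl Su : R)
  (hP : 0 < Pl < Pu) (hS : 0 < Sl < Su)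
  (Xpos : forall w, 0 < X w)
  (Xint : P.-integrable setT (EFin \o X)) :
  ('E_P[fun w => UIL_R Pl Pu (X w)] =
     (- (1 / 2))%:E *
     \int[@lebesgue_measure R]_(K in `[Pl, Pu])
        ((powR K (- (3 / 2)))%:E * call_price P X K))%E /\
  ('E_P[fun w => UIL_L Sl Su (X w)] =
     (- (1 / 2))%:E *
     \int[@lebesgue_measure R]_(K in `[Sl, Su])
        ((powR K (- (3 / 2)))%:E * put_price P X K))%E.
Proof.
case/andP: hP => Pl0 PlPu; case/andP: hS => Sl0 SlSu.
have mX : measurable_fun setT X by [].
have mw : measurable_fun setT (fun K : R => powR K (- (3 / 2))).
  exact: measurable_powR.
have w0 K : 0 <= powR K (- (3 / 2)) by exact: powR_ge0.
split.
- apply: (@expectation_eq_strike_integral _ _ _ P X `[Pl, Pu] _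
           (fun x K => Num.max (x - K) 0)) => //.
  + apply: measurable_maxr => //.
    exact: measurable_funB measurable_fst measurable_snd.
  + by move=> x K; rewrite le_max lexx orbT.
  + by move=> t; exact: integral_call_payoff (Xpos t).
- apply: (@expectation_eq_strike_integral _ _ _ P X `[Sl, Su] _
           (fun x K => Num.max (K - x) 0)) => //.
  + apply: measurable_maxr => //.
    exact: measurable_funB measurable_snd measurable_fst.
  + by move=> x K; rewrite le_max lexx orbT.
  + by move=> t; exact: integral_put_payoff (Xpos t).
Qed.
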